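(* Let $\mathfrak g$ be a finite-dimensional complex simple Lie algebra and $q\in\mathbb C^\times$ not a root of unity. (i) For all $w\in W$ and $\boldsymbol\varpi\in\mathcal P_q$, $\mathrm{wt}(T_w\boldsymbol\varpi)=w(\mathrm{wt}(\boldsymbol\varpi))$. (ii) Suppose $\boldsymbol\varpi_1,\boldsymbol\varpi_2\in\mathcal P_q$ satisfy $\mathrm{wt}(\boldsymbol\varpi_r)\in P^+$ for $r=1,2$, and $w_1,w_2\in W$. If $T_{w_1}\boldsymbol\varpi_1=T_{w_2}\boldsymbol\varpi_2$ then $\mathrm{wt}(\boldsymbol\varpi_1)=\mathrm{wt}(\boldsymbol\varpi_2)$, and, setting $\lambda=\mathrm{wt}(\boldsymbol\varpi_1)$, $w_1^{-1}w_2\in W(\lambda)$.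
   Context: $I=\{1,\dots,n\}$, $(a_{ij})$ the Cartan matrix of $\mathfrak g$, $\omega_i$ the fundamental weights, $\check\alpha_i$ simple coroots, $P$ the weight lattice, $P^+$ dominant weights, $W$ the Weyl group with simple reflections $s_i$; for $\lambda\in P^+$, $W(\lambda)$ is the subgroup generated by $\{s_i:\lambda(\check\alpha_i)=0\}$. $d_i$ positive integers with $(d_ia_{ij})$ symmetric, $q_i=q^{d_i}$. $\mathcal P_q=\mathbb A^n$ with $\mathbb A$ the multiplicative group of rational functions with value 1 at $u=0$; $\boldsymbol\omega_{i,a}$ has $i$-th entry $1-au$ and others $1$ (these freely generate $\mathcal P_q$); $\mathrm{wt}:\mathcal P_q\to P$ is the homomorphism with $\mathrm{wt}(\boldsymbol\omega_{i,a})=\omega_i$. Braid action: $(T_i\boldsymbol\varpi)_j=\varpi_j$ if $a_{ji}=0$; $\varpi_j(u)\varpi_i(q_iu)$ if $a_{ji}=-1$; $\varpi_j(u)\varpi_i(q^3u)\varpi_i(qu)$ if $a_{ji}=-2$; $\varpi_j(u)\varpi_i(q^5u)\varpi_i(q^3u)\varpi_i(qu)$ if $a_{ji}=-3$; $(T_i\boldsymbol\varpi)_i=1/\varpi_i(q_i^2u)$; $T_w=T_{i_1}\cdots T_{i_k}$ for a reduced expression $w=s_{i_1}\cdots s_{i_k}$. *)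

From HB Require Import structures.
From mathcomp Require Import all_boot all_order all_algebra.
From mathcomp Require Import reals complex.
Set Implicit Arguments. Unset Strict Implicit. Unset Printing Implicit Defensive.
Import Order.TTheory GRing.Theory Num.Theory.
Local Open Scope ring_scope.

(* Convention: A i j = a_ij = alpha_j(check alpha_i), so alpha_i = sum_j a_ji omega_j. *)

Definition simple_cartan (R : realType) (n : nat) (A : 'M[int]_n) (d : 'I_n -> nat) : Prop :=
  (0 < n)%N /\
  (forall i, A i i = 2) /\
  (forall i j, i != j -> A i j <= 0) /\
  (forall i j, A i j = 0 <-> A j i = 0) /\
  (forall i, (0 < d i)%N) /\
  (forall i j, (d i)%:Z * A i j = (d j)%:Z * A j i) /\
  (forall S : {set 'I_n}, S != set0 -> S != setT ->
     exists i j, [/\ i \in S, j \notin S & A i j != 0]) /\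
  (* finite type: the symmetrized matrix (d_i a_ij) is positive definite *)
  (forall x : 'I_n -> R, (exists i, x i != 0) ->
     0 < \sum_i \sum_j x i * ((d i)%:R * (A i j)%:~R) * x j).

(* Weight lattice P, in coordinates w.r.t. fundamental weights:
   lambda = sum_i lambda i * omega_i, lambda i = lambda(check alpha_i). *)
Definition weight (n : nat) := 'I_n -> int.

Definition dominant (n : nat) (l : weight n) : Prop := forall i, 0 <= l i.

(* simple reflection: s_i lambda = lambda - lambda(check alpha_i) alpha_i *)
Definition sref (n : nat) (A : 'M[int]_n) (i : 'I_n) (l : weight n) : weight n :=
  fun j => l j - l i * A j i.

(* Elements of W are represented by words (s_{i1} ... s_{ik} <-> [:: i1; ...; ik]);
   two words are the same element of W iff they act identically on P
   (W acts faithfully on P, since P spans h^* ). *)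
Definition wact (n : nat) (A : 'M[int]_n) (w : seq 'I_n) (l : weight n) : weight n :=
  foldr (sref A) l w.

Definition weq (n : nat) (A : 'M[int]_n) (w w' : seq 'I_n) : Prop :=
  forall l, wact A w l = wact A w' l.

Definition reduced (n : nat) (A : 'M[int]_n) (w : seq 'I_n) : Prop :=
  forall w', weq A w w' -> (size w <= size w')%N.

Definition winv (n : nat) (w : seq 'I_n) : seq 'I_n := rev w.

Definition in_stab (n : nat) (A : 'M[int]_n) (l : weight n) (w : seq 'I_n) : Prop :=
  exists v : seq 'I_n, all (fun i => l i == 0) v /\ weq A v w.

(* A rational function f(u) is represented as a pair (numerator, denominator)
   of polynomials in u; it lies in the group A when both have value 1 at u = 0
   (every rational function with value 1 at 0 has such a representation). *)
Definition ratf (F : fieldType) := ({poly F} * {poly F})%type.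

Definition inA (F : fieldType) (f : ratf F) : Prop := f.1.[0] = 1 /\ f.2.[0] = 1.

Definition req (F : fieldType) (f g : ratf F) : Prop := f.1 * g.2 = g.1 * f.2.

Definition rmul (F : fieldType) (f g : ratf F) : ratf F := (f.1 * g.1, f.2 * g.2).
Definition rinv (F : fieldType) (f : ratf F) : ratf F := (f.2, f.1).
Definition rsub (F : fieldType) (c : F) (f : ratf F) : ratf F :=
  (f.1 \Po (c *: 'X), f.2 \Po (c *: 'X)).

(* elements of P_q = A^n *)
Definition Pq (F : fieldType) (n : nat) := 'I_n -> ratf F.
Definition inPq (F : fieldType) (n : nat) (p : Pq F n) : Prop := forall i, inA (p i).
Definition Pq_eq (F : fieldType) (n : nat) (p p' : Pq F n) : Prop := forall i, req (p i) (p' i).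

(* wt : P_q -> P, the homomorphism with wt(omega_{i,a}) = omega_i:
   the i-th coordinate is deg(numerator_i) - deg(denominator_i). *)
Definition wt (F : fieldType) (n : nat) (p : Pq F n) : weight n :=
  fun i => (size (p i).1)%:Z - (size (p i).2)%:Z.

Definition Tbraid (F : fieldType) (n : nat) (A : 'M[int]_n) (d : 'I_n -> nat) (q : F)
    (i : 'I_n) (p : Pq F n) : Pq F n :=
  fun j =>
    if j == i then rinv (rsub (q ^+ (2 * d i)) (p i))
    else if A j i == -1 then rmul (p j) (rsub (q ^+ d i) (p i))
    else if A j i == -2 then rmul (p j) (rmul (rsub (q ^+ 3) (p i)) (rsub q (p i)))
    else if A j i == -3 then
      rmul (p j) (rmul (rsub (q ^+ 5) (p i)) (rmul (rsub (q ^+ 3) (p i)) (rsub q (p i))))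
    else p j.

Definition Tw (F : fieldType) (n : nat) (A : 'M[int]_n) (d : 'I_n -> nat) (q : F)
    (w : seq 'I_n) (p : Pq F n) : Pq F n :=
  foldr (Tbraid A d q) p w.

Definition not_root_of_unity (F : fieldType) (q : F) : Prop :=
  q != 0 /\ forall k : nat, (0 < k)%N -> q ^+ k != 1.

From HB Require Import structures.
From mathcomp Require Import all_boot all_order all_algebra.
From mathcomp Require Import reals complex boolp.
From mathcomp Require Import ring zify.
Set Implicit Arguments. Unset Strict Implicit. Unset Printing Implicit Defensive.
Import Order.TTheory GRing.Theory Num.Theory.
Local Open Scope ring_scope.

(* By (i), which holds because wt only counts degrees (so it is multiplicative
   and insensitive to u |-> c u) and T_i therefore acts on weights as s_i, the
   hypothesis of (ii) says that u = w1^-1 w2 maps the dominant weight wt p2 to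
   the dominant weight wt p1.  Peel the last letter off a reduced word
   u = u' s_i.  By Tits' lemma (if l(u' s_i) > l(u') then u'(alpha_i^v) is a
   nonnegative combination of simple coroots),
   <wt p2, alpha_i^v> = - <wt p1, u'(alpha_i^v)> <= 0, so s_i fixes wt p2, and
   induction on the length concludes.  Tits' lemma is proved by descending into
   the rank-two subgroup generated by s_i and the last letter of a reduced word;
   positive definiteness of the symmetrized Cartan matrix leaves only the six
   finite dihedral cases, where the claim is a finite computation. *)

(* The pairs (a_ij, a_ji) of rank-two Cartan matrices of finite type:
   A1 x A1, A2, B2, C2 and G2. *)
Definition finite_type_pair (a b : int) : bool :=
  (a, b) \in [:: (0, 0); (-1, -1); (-1, -2); (-2, -1); (-1, -3); (-3, -1)].

Lemma finite_type_pairP (a b : int) :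
  a <= 0 -> b <= 0 -> (a == 0) = (b == 0) -> a * b < 4 -> finite_type_pair a b.
Proof.
case: a => [[|a]|a] //; case: b => [[|b]|b] //= _ _ _.
rewrite !NegzE mulrNN.
by case: a => [|[|[|a]]]; case: b => [|[|[|b]]] //; lia.
Qed.

Lemma finite_type_pair_entry a b : finite_type_pair a b ->
  [\/ a = 0, a = -1, a = -2 | a = -3].
Proof.
rewrite /finite_type_pair !inE => /or4P[|||/orP[|/orP[|]]] /eqP[-> _];
  by [apply: Or41 | apply: Or42 | apply: Or43 | apply: Or44].
Qed.

Section PositiveDefinite.
Variables (R : realFieldType) (n : nat) (B : 'I_n -> 'I_n -> R).
Hypothesis B_posdef : forall x : 'I_n -> R,
  (exists i, x i != 0) -> 0 < \sum_i \sum_j x i * B i j * x j.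

Lemma sum_supp2 (f : 'I_n -> R) i j : i != j ->
  (forall k, k != i -> k != j -> f k = 0) -> \sum_k f k = f i + f j.
Proof.
move=> ij f0; rewrite (bigD1 i) //= (bigD1 j) 1?eq_sym //=.
by rewrite big1 ?addr0 // => k /andP[ki kj]; apply: f0.
Qed.

Lemma quad_form_supp2 (x : 'I_n -> R) i j : i != j ->
    (forall k, k != i -> k != j -> x k = 0) ->
  \sum_k \sum_l x k * B k l * x l =
  x i * B i i * x i + x i * B i j * x j + (x j * B j i * x i + x j * B j j * x j).
Proof.
move=> ij x0; rewrite !(sum_supp2 ij) // => k ki kj.
  1,2: by rewrite (x0 k) // mulr0.
by rewrite big1 // => l _; rewrite (x0 k) // !mul0r.
Qed.

Lemma posdef_minor2_gt0 i j : i != j -> B i j = B j i ->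
  0 < B i i * B j j - B i j * B j i.
Proof.
move=> ij Bsym; have ji : (j == i) = false by rewrite eq_sym (negbTE ij).
have Bii : 0 < B i i.
  pose e k : R := if k == i then 1 else 0.
  have := B_posdef (ex_intro _ i _ : exists k, e k != 0).
  rewrite (quad_form_supp2 ij) => [|k /negbTE ki _]; last by rewrite /e ki.
  rewrite /e eqxx ji !(mulr0, mul0r, mulr1, mul1r, addr0); apply; exact: oner_neq0.
pose x k : R := if k == i then - B i j else if k == j then B i i else 0.
have := B_posdef (ex_intro _ j _ : exists k, x k != 0).
rewrite (quad_form_supp2 ij) => [|k /negbTE ki /negbTE kj]; last by rewrite /x ki kj.
rewrite /x eqxx ji eqxx Bsym.
have -> : - B j i * B i i * - B j i + - B j i * B j i * B i i +
    (B i i * B j i * - B j i + B i i * B j j * B i i) =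
    B i i * (B i i * B j j - B j i * B j i) by ring.
by rewrite pmulr_rgt0 //; apply; rewrite gt_eqF.
Qed.
End PositiveDefinite.

Lemma simple_cartan_pair (R : realType) n (A : 'M[int]_n) d :
  simple_cartan R A d -> forall i j, i != j -> finite_type_pair (A i j) (A j i).
Proof.
case=> _ [A_diag [A_le0 [A_eq0 [d_gt0 [d_sym [_ A_posdef]]]]]] i j ij.
apply: finite_type_pairP; [exact: A_le0 | by rewrite A_le0 // eq_sym |
  by apply/eqP/eqP => /A_eq0 |].
have B_sym : (d i)%:R * (A i j)%:~R = (d j)%:R * (A j i)%:~R :> R.
  by rewrite !pmulrn -!intrM d_sym.
have := posdef_minor2_gt0 A_posdef ij B_sym.
rewrite !A_diag !pmulrn -!intrM -intrB ltr0z.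
have := d_gt0 i; have := d_gt0 j; have := d_sym i j.
move: (d i) (d j) (A i j) (A j i) => di dj a b; nia.
Qed.

Section WeylGroup.
Variables (n : nat) (A : 'M[int]_n).
Hypothesis A_diag : forall i, A i i = 2.

Lemma wact_cat u v l : wact A (u ++ v) l = wact A u (wact A v l).
Proof. by rewrite /wact foldr_cat. Qed.

Lemma wact_rcons w i l : wact A (rcons w i) l = wact A w (sref A i l).
Proof. by rewrite -cats1 wact_cat. Qed.

Lemma srefK i : involutive (sref A i).
Proof. by move=> l; apply/funext => j; rewrite /sref A_diag; ring. Qed.

Lemma wact_revK u : cancel (wact A u) (wact A (rev u)).
Proof.
elim: u => [//|i u IH] l.
by rewrite rev_cons wact_rcons /= srefK IH.
Qed.

Lemma wact_Krev u : cancel (wact A (rev u)) (wact A u).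
Proof. by move=> l; rewrite -{1}(revK u) wact_revK. Qed.

Lemma weq_sym u v : weq A u v -> weq A v u.
Proof. by move=> uv l; rewrite uv. Qed.

Lemma weq_trans u v w : weq A u v -> weq A v w -> weq A u w.
Proof. by move=> uv vw l; rewrite uv vw. Qed.

Lemma weq_catl w u v : weq A u v -> weq A (w ++ u) (w ++ v).
Proof. by move=> uv l; rewrite !wact_cat uv. Qed.

Lemma weq_catr w u v : weq A u v -> weq A (u ++ w) (v ++ w).
Proof. by move=> uv l; rewrite !wact_cat uv. Qed.

Lemma weq_rev u v : weq A u v -> weq A (rev u) (rev v).
Proof. by move=> uv l; rewrite -{1}(wact_Krev v l) -uv wact_revK. Qed.

Lemma weq_rcons i u v : weq A u v -> weq A (rcons u i) (rcons v i).
Proof. by rewrite -!cats1; apply: weq_catr. Qed.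

Lemma weq_cons2 i w : weq A [:: i, i & w] w.
Proof. by move=> l /=; rewrite srefK. Qed.

Lemma weq_rcons2 w i : weq A (rcons (rcons w i) i) w.
Proof. by move=> l; rewrite !wact_rcons srefK. Qed.

Lemma weq_in_stab l u v : weq A u v -> in_stab A l u -> in_stab A l v.
Proof. by move=> uv [x [xl xu]]; exists x; split => //; apply: weq_trans uv. Qed.

Lemma wlength_ex w : exists k, `[< exists2 w', weq A w w' & size w' = k >].
Proof. by exists (size w); apply/asboolP; exists w. Qed.

Definition wlength w := ex_minn (wlength_ex w).

Lemma wlength_rep w : exists2 w', weq A w w' & size w' = wlength w.
Proof. by rewrite /wlength; case: ex_minnP => k /asboolP. Qed.

Lemma wlength_min w w' : weq A w w' -> (wlength w <= size w')%N.
Proof.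
by move=> ww'; rewrite /wlength; case: ex_minnP => k _; apply; apply/asboolP; exists w'.
Qed.

Lemma wlength_size w : (wlength w <= size w)%N.
Proof. exact: wlength_min. Qed.

Lemma eq_wlength u v : weq A u v -> wlength u = wlength v.
Proof.
suff le_wlength u' v' : weq A u' v' -> (wlength u' <= wlength v')%N.
  by move=> uv; apply/eqP; rewrite eqn_leq !le_wlength // weq_sym.
by move=> uv; have [w vw <-] := wlength_rep v'; apply/wlength_min/(weq_trans uv).
Qed.

Lemma wlength_cat u v : (wlength (u ++ v) <= wlength u + wlength v)%N.
Proof.
have [u' uu' <-] := wlength_rep u; have [v' vv' <-] := wlength_rep v.
by rewrite -size_cat; apply/wlength_min/(weq_trans (weq_catr _ uu')); apply: weq_catl.
Qed.

Lemma wlength_rcons w i : (wlength (rcons w i) <= (wlength w).+1)%N.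
Proof.
by rewrite -cats1 -addn1 (leq_trans (wlength_cat _ _)) ?leq_add2l ?wlength_size.
Qed.

Lemma wlength_rcons_ge w i : (wlength w <= (wlength (rcons w i)).+1)%N.
Proof. by rewrite -(eq_wlength (weq_rcons2 w i)) wlength_rcons. Qed.

Lemma reduced_cat u v : wlength (u ++ v) = size (u ++ v) ->
  wlength u = size u /\ wlength v = size v.
Proof.
have := wlength_cat u v; have := wlength_size u; have := wlength_size v.
rewrite size_cat; lia.
Qed.

End WeylGroup.

Section Coroots.
Variables (n : nat) (A : 'M[int]_n).
Hypothesis A_diag : forall i, A i i = 2.

(* [c] stands for the coroot [\sum_k c k * alpha_k^v]; since
   [alpha_i (alpha_k^v) = A k i], the reflection [s_i] acts on it as below. *)
Definition coref i (c : 'I_n -> int) : 'I_n -> int :=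
  fun j => c j - (j == i)%:R * \sum_k A k i * c k.

Definition cowact (w : seq 'I_n) c := foldr coref c w.

Definition pairing (l : weight n) (c : 'I_n -> int) := \sum_k l k * c k.

Definition ebasis i : 'I_n -> int := fun j => (j == i)%:R.

Lemma sum_mul_ebasis (f : 'I_n -> int) i : \sum_k f k * ebasis i k = f i.
Proof.
rewrite (bigD1 i) //= /ebasis eqxx mulr1 big1 ?addr0 // => k /negbTE->.
by rewrite mulr0.
Qed.

Lemma pairing_ebasis l i : pairing l (ebasis i) = l i.
Proof. exact: sum_mul_ebasis. Qed.

Lemma pairing_ebasisl i c : pairing (ebasis i) c = c i.
Proof. by rewrite -(sum_mul_ebasis c); apply: eq_bigr => k _; rewrite mulrC. Qed.

Lemma pairing_coref i l c : pairing (sref A i l) (coref i c) = pairing l c.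
Proof.
rewrite /pairing /sref /coref; set S := \sum_k A k i * c k.
have expand k : (l k - l i * A k i) * (c k - (k == i)%:R * S) =
    l k * c k - l i * (A k i * c k) - S * (l k * ebasis i k)
    + l i * S * (A k i * ebasis i k) by rewrite /ebasis; ring.
rewrite (eq_bigr _ (fun k _ => expand k)) !big_split /= !sumrN -!mulr_sumr.
by rewrite !sum_mul_ebasis A_diag -/S; ring.
Qed.

Lemma pairing_cowact w l c : pairing (wact A w l) (cowact w c) = pairing l c.
Proof. by elim: w => [//|i w IH] /=; rewrite pairing_coref. Qed.

Lemma cowact_cat u v c : cowact (u ++ v) c = cowact u (cowact v c).
Proof. by rewrite /cowact foldr_cat. Qed.

Lemma eq_cowact u v c : weq A u v -> cowact u c = cowact v c.
Proof.
have adj w k : cowact w c k = pairing (wact A (rev w) (ebasis k)) c.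
  by rewrite -(pairing_cowact w) wact_Krev // pairing_ebasisl.
by move=> uv; apply/funext => k; rewrite !adj (weq_rev A_diag uv).
Qed.

Lemma corefD i c1 c2 :
  coref i (fun j => c1 j + c2 j) = fun j => coref i c1 j + coref i c2 j.
Proof.
apply/funext => j; rewrite /coref.
under eq_bigr do rewrite mulrDr.
by rewrite big_split /=; ring.
Qed.

Lemma corefZ i p c : coref i (fun j => p * c j) = fun j => p * coref i c j.
Proof.
apply/funext => j; rewrite /coref.
under eq_bigr do rewrite mulrCA.
by rewrite -mulr_sumr; ring.
Qed.

Lemma cowactD w c1 c2 :
  cowact w (fun j => c1 j + c2 j) = fun j => cowact w c1 j + cowact w c2 j.
Proof. by elim: w => [//|i w IH] /=; rewrite IH corefD. Qed.

Lemma cowactZ w p c : cowact w (fun j => p * c j) = fun j => p * cowact w c j.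
Proof. by elim: w => [//|i w IH] /=; rewrite IH corefZ. Qed.

Lemma coref_ebasis i : coref i (ebasis i) = fun j => -1 * ebasis i j.
Proof. by apply/funext => j; rewrite /coref sum_mul_ebasis A_diag /ebasis; ring. Qed.

End Coroots.

Fixpoint alt k : seq bool := if k is k'.+1 then odd k' :: alt k' else [::].

Lemma size_alt k : size (alt k) = k.
Proof. by elim: k => //= k ->. Qed.

Lemma drop_alt k j : drop j (alt (j + k)) = alt k.
Proof. by elim: j => [|j IH]; rewrite ?drop0 //= IH. Qed.

(* [s] ([x = true]) or [s'] acting on the coordinates [(p, r)] of
   [p alpha_s^v + r alpha_s'^v], where [a = A s s'] and [b = A s' s]. *)
Definition rank2_coref (a b : int) (x : bool) (pq : int * int) : int * int :=
  if x then (- pq.1 - b * pq.2, pq.2) else (pq.1, - pq.2 - a * pq.1).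

Definition braid_order (a b : int) : nat :=
  match absz (a * b) with 0 => 2 | 1 => 3 | 2 => 4 | _ => 6 end.

Lemma braid_order_gt0 a b : (0 < braid_order a b)%N.
Proof. by rewrite /braid_order; case: absz => [|[|[|]]]. Qed.

Lemma rank2_alt_nonneg a b k : finite_type_pair a b -> (k < braid_order a b)%N ->
  let pq := foldr (rank2_coref a b) (1, 0) (alt k) in 0 <= pq.1 /\ 0 <= pq.2.
Proof.
move=> ab lt_k; apply/andP.
suff /allP : all (fun k => let pq := foldr (rank2_coref a b) (1, 0) (alt k) in
    (0 <= pq.1) && (0 <= pq.2)) (iota 0 (braid_order a b)) by apply; rewrite mem_iota.
clear lt_k; move: ab; rewrite /finite_type_pair !inE.
by move=> /or4P[|||/orP[|/orP[|]]] /eqP[-> ->].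
Qed.

Section RankTwo.
Variables (n : nat) (A : 'M[int]_n) (s s' : 'I_n).
Hypothesis A_diag : forall i, A i i = 2.
Hypothesis ss'_finite : finite_type_pair (A s s') (A s' s).

Definition dletter (x : bool) := if x then s else s'.

Definition coroot2 (p r : int) : 'I_n -> int :=
  fun j => p * ebasis s j + r * ebasis s' j.

Local Notation m := (braid_order (A s s') (A s' s)).

(* The braid relation (s s')^m = 1 of the dihedral group of order 2m. *)
Lemma braid_rank2 :
  weq A (rcons (map dletter (alt m)) s) (map dletter (behead (alt m))).
Proof.
move: ss'_finite; rewrite /finite_type_pair !inE.
move=> /or4P[|||/orP[|/orP[|]]] /eqP[ab ba] l; rewrite ab ba /=.
all: by apply/funext => j; rewrite /sref /= !A_diag ab ba; ring.
Qed.

Lemma coref_coroot2 x p r : coref A (dletter x) (coroot2 p r) =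
  coroot2 (rank2_coref (A s s') (A s' s) x (p, r)).1
          (rank2_coref (A s s') (A s' s) x (p, r)).2.
Proof.
apply/funext => j; rewrite /coref /coroot2.
under eq_bigr do rewrite mulrDr mulrCA [X in _ + X]mulrCA.
rewrite big_split /= -!mulr_sumr !sum_mul_ebasis.
by case: x; rewrite /= !A_diag /ebasis; ring.
Qed.

Lemma cowact_coroot2 bs p r :
  let pq := foldr (rank2_coref (A s s') (A s' s)) (p, r) bs in
  cowact A (map dletter bs) (coroot2 p r) = coroot2 pq.1 pq.2.
Proof.
by elim: bs => [//|x bs IH] /=; rewrite IH coref_coroot2 -surjective_pairing.
Qed.

Lemma reduced_alt bs : wlength A (map dletter bs) = size bs -> last false bs = false ->
  bs = alt (size bs).
Proof.
elim: bs => [//|x bs IH] red last_x.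
have /reduced_cat[_ red'] : wlength A ([:: dletter x] ++ map dletter bs) =
  size ([:: dletter x] ++ map dletter bs) by rewrite size_cat size_map; exact: red.
have {IH} : bs = alt (size bs).
  by apply: IH; [rewrite -(size_map dletter) | case: bs last_x {red red'}].
move: (size bs) red last_x => k red last_x {red'} bs_alt; subst bs.
rewrite /= size_alt; case: k red last_x => [|k] red; first by move=> /= ->.
case: (eqVneq x (odd k)) => [xk _|]; last by clear red => /=; case: x; case: (odd k).
have /wlength_min : weq A (map dletter (x :: alt k.+1)) (map dletter (alt k)).
  by rewrite xk; apply: weq_cons2.
by rewrite red /= size_map size_alt ltnNge ltnW.
Qed.

Lemma rank2_cowact_nonneg bs : wlength A (map dletter bs) = size bs ->
    (size bs <= wlength A (rcons (map dletter bs) s))%N ->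
  exists p r, [/\ 0 <= p, 0 <= r & cowact A (map dletter bs) (ebasis s) = coroot2 p r].
Proof.
move=> red long.
have last_bs : last false bs = false.
  case/lastP: bs red long => [//|bs x] _; rewrite last_rcons.
  case: x => // long; exfalso; move: long.
  rewrite map_rcons /= (eq_wlength (weq_rcons2 A_diag _ _)) size_rcons.
  by have := wlength_size A (map dletter bs); rewrite size_map; lia.
have lt_m : (size bs < m)%N.
  rewrite ltnNge; apply/negP => le_m; move: long.
  rewrite (reduced_alt red last_bs) size_alt; move: (size bs) le_m => k le_m.
  rewrite -(subnK le_m) -{1}(cat_take_drop (k - m) (alt (k - m + m))) drop_alt.
  rewrite map_cat rcons_cat (eq_wlength (weq_catl _ braid_rank2)).
  move/leq_trans/(_ (wlength_size _ _)).
  rewrite size_cat !size_map size_takel ?size_alt ?leq_addr // size_behead size_alt.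
  by have := braid_order_gt0 (A s s') (A s' s); lia.
have [p_ge0 r_ge0] := rank2_alt_nonneg ss'_finite lt_m.
have -> : ebasis s = coroot2 1 0.
  by apply/funext => j; rewrite /coroot2 mul1r mul0r addr0.
rewrite (reduced_alt red last_bs) cowact_coroot2.
by do 2 eexists; split; [exact: p_ge0 | exact: r_ge0 |].
Qed.
End RankTwo.

Section Tits.
Variables (n : nat) (A : 'M[int]_n).
Hypothesis A_diag : forall i, A i i = 2.
Hypothesis A_finite : forall i j, i != j -> finite_type_pair (A i j) (A j i).

Definition nonneg (c : 'I_n -> int) := forall j, 0 <= c j.

(* Move letters [s], [s'] from the end of [v] to [bs] while this shortens [v]. *)
Lemma rank2_descent w s s' v bs : (0 < size bs)%N ->
    weq A (v ++ map (dletter s s') bs) w -> wlength A v + size bs = wlength A w ->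
  exists v' bs', [/\ (0 < size bs')%N, weq A (v' ++ map (dletter s s') bs') w,
    wlength A v' + size bs' = wlength A w,
    (wlength A v' <= wlength A (rcons v' s))%N &
    (wlength A v' <= wlength A (rcons v' s'))%N].
Proof.
move: {2}(wlength A v) (erefl (wlength A v)) => k.
elim/ltn_ind: k v bs => k IH v bs len_v bs_gt0 vw len_w.
have [[x lt_vx]|[le_s le_s']] :
    (exists x, wlength A (rcons v (dletter s s' x)) < wlength A v)%N \/
    (wlength A v <= wlength A (rcons v s))%N /\
    (wlength A v <= wlength A (rcons v s'))%N.
  case: (ltnP (wlength A (rcons v s)) (wlength A v)) => [lt_s|le_s].
    by left; exists true.
  by case: (ltnP (wlength A (rcons v s')) (wlength A v)) => [lt_s'|le_s'];
    [left; exists false | right].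
  apply: (IH _ _ (rcons v (dletter s s' x)) (x :: bs) erefl) => //.
  - by rewrite -len_v.
  - by rewrite cat_rcons; apply: weq_trans vw; apply/weq_catl/weq_cons2.
  - by have := wlength_rcons_ge A_diag v (dletter s s' x); move: len_w lt_vx => /=; lia.
by exists v, bs.
Qed.

Lemma nonneg_cowact_ebasis w s : (wlength A w <= wlength A (rcons w s))%N ->
  nonneg (cowact A w (ebasis s)).
Proof.
move: {2}(wlength A w) (erefl (wlength A w)) => k.
elim/ltn_ind: k w s => k IH w s len_w long.
have [w0 ww0 size_w0] := wlength_rep A w.
case/lastP: w0 ww0 size_w0 => [|w1 s'] ww0 size_w0.
  by rewrite (eq_cowact A_diag _ ww0) => j; rewrite /ebasis; case: (j == s).
rewrite size_rcons in size_w0.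
have len_w1 := wlength_size A w1.
have ss' : s != s'.
  apply: contraTneq long => ->; rewrite -ltnNge.
  have /wlength_min : weq A (rcons w s') w1.
    exact: weq_trans (weq_rcons _ ww0) (weq_rcons2 A_diag _ _).
  by rewrite -size_w0; lia.
have w1s'_w : weq A (w1 ++ map (dletter s s') [:: false]) w.
  by rewrite cats1; apply: weq_sym.
have [|v [bs [bs_gt0 vw len_vbs le_vs le_vs']]] :=
  @rank2_descent w s s' w1 [:: false] erefl w1s'_w.
  have := wlength_rcons A w1 s'; rewrite -(eq_wlength ww0) /=; lia.
have lt_v : (wlength A v < k)%N by lia.
have red_bs : wlength A (map (dletter s s') bs) = size bs.
  have := wlength_cat A v (map (dletter s s') bs); rewrite (eq_wlength vw).
  by have := wlength_size A (map (dletter s s') bs); rewrite size_map; lia.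
have long_bs : (size bs <= wlength A (rcons (map (dletter s s') bs) s))%N.
  have := wlength_cat A v (rcons (map (dletter s s') bs) s).
  by rewrite -rcons_cat (eq_wlength (weq_rcons _ vw)); lia.
have [p [r [p_ge0 r_ge0 bs_s]]] :=
  rank2_cowact_nonneg A_diag (A_finite ss') red_bs long_bs.
rewrite -(eq_cowact A_diag _ vw) cowact_cat bs_s /coroot2 cowactD !cowactZ => j.
by rewrite addr_ge0 // mulr_ge0 // (IH _ lt_v v _ erefl).
Qed.

Lemma reduced_dominant_wact_stab w l mu : wlength A w = size w ->
  dominant l -> dominant mu -> wact A w l = mu -> l = mu /\ in_stab A l w.
Proof.
elim/last_ind: w => [|w i IH] red dom_l dom_mu wl.
  by split=> //; exists [::].
have red_w : wlength A w = size w by move: red; rewrite -cats1 => /reduced_cat[].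
have nn : nonneg (cowact A w (ebasis i)).
  by apply: nonneg_cowact_ebasis; rewrite red red_w size_rcons.
have li0 : l i = 0.
  have : l i = - pairing mu (cowact A w (ebasis i)).
    rewrite -(pairing_ebasis l i) -(pairing_cowact A_diag (rcons w i) l) wl.
    rewrite -cats1 cowact_cat /= coref_ebasis // cowactZ /pairing -sumrN.
    by apply: eq_bigr => j _; ring.
  move=> li; apply/eqP; rewrite eq_le dom_l andbT li oppr_le0.
  by apply: sumr_ge0 => j _; rewrite mulr_ge0.
have sl : sref A i l = l by apply/funext => j; rewrite /sref li0 mul0r subr0.
have /(IH red_w dom_l dom_mu)[<- [v [vl vw]]] : wact A w l = mu.
  by rewrite -wl wact_rcons sl.
split=> //; exists (rcons v i); split; first by rewrite all_rcons li0 eqxx.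
exact: weq_rcons.
Qed.

Lemma dominant_wact_stab w l mu : dominant l -> dominant mu -> wact A w l = mu ->
  l = mu /\ in_stab A l w.
Proof.
have [w0 ww0 red] := wlength_rep A w.
move=> dom_l dom_mu; rewrite ww0 => /(reduced_dominant_wact_stab _ dom_l dom_mu).
rewrite -(eq_wlength ww0) => /(_ (esym red)) [-> st]; split=> //.
exact: weq_in_stab (weq_sym ww0) st.
Qed.

End Tits.

Section RationalFunctions.
Variable F : fieldType.

Definition rdeg (f : ratf F) : int := (size f.1)%:Z - (size f.2)%:Z.

Lemma inA_neq0 (f : ratf F) : inA f -> f.1 != 0 /\ f.2 != 0.
Proof.
case=> f1 f2; split; apply/eqP => f0; [move: f1 | move: f2];
  by rewrite f0 horner0 => /esym/eqP; rewrite oner_eq0.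
Qed.

Lemma rsub_inA c (f : ratf F) : inA f -> inA (rsub c f).
Proof. by case=> f1 f2; split; rewrite /= horner_comp hornerZ hornerX mulr0. Qed.

Lemma rmul_inA (f g : ratf F) : inA f -> inA g -> inA (rmul f g).
Proof. by case=> f1 f2 [g1 g2]; split; rewrite /= hornerM ?f1 ?f2 ?g1 ?g2 mulr1. Qed.

Lemma rinv_inA (f : ratf F) : inA f -> inA (rinv f).
Proof. by case. Qed.

Lemma sizez_mul (p r : {poly F}) : p != 0 -> r != 0 ->
  (size (p * r))%:Z = (size p)%:Z + (size r)%:Z - 1.
Proof.
move=> p0 r0; rewrite size_mul //.
by move: p0 r0; rewrite -!size_poly_gt0 -subn1; move: (size p) (size r); lia.
Qed.

Lemma rdeg_rsub c (f : ratf F) : c != 0 -> rdeg (rsub c f) = rdeg f.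
Proof.
move=> c0; have cX : size (c *: 'X : {poly F}) = 2 by rewrite size_scale ?size_polyX.
by rewrite /rdeg /= !size_comp_poly2.
Qed.

Lemma rdeg_rmul (f g : ratf F) : inA f -> inA g -> rdeg (rmul f g) = rdeg f + rdeg g.
Proof.
move=> /inA_neq0[f1 f2] /inA_neq0[g1 g2].
by rewrite /rdeg /= !sizez_mul //; ring.
Qed.

Lemma rdeg_rinv (f : ratf F) : rdeg (rinv f) = - rdeg f.
Proof. by rewrite /rdeg /=; ring. Qed.

Lemma req_rdeg (f g : ratf F) : inA f -> inA g -> req f g -> rdeg f = rdeg g.
Proof.
move=> /inA_neq0[f1 f2] /inA_neq0[g1 g2] fg.
have := congr1 (fun p : {poly F} => (size p)%:Z) fg.
rewrite /rdeg /= !sizez_mul //.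
by move: (size f.1) (size f.2) (size g.1) (size g.2); lia.
Qed.

End RationalFunctions.

Section BraidAction.
Variables (F : fieldType) (n : nat) (A : 'M[int]_n) (d : 'I_n -> nat) (q : F).

Lemma Tbraid_inPq i p : inPq p -> inPq (Tbraid A d q i p).
Proof.
move=> p_inA j; have pi_inA c := rsub_inA c (p_inA i).
rewrite /Tbraid; case: ifP => _; first exact: rinv_inA.
have pj_inA := p_inA j.
by do 3?case: ifP => _; do ?apply: rmul_inA.
Qed.

Lemma Tw_inPq w p : inPq p -> inPq (Tw A d q w p).
Proof. by move=> p_inA; elim: w => [//|i w IH]; apply: Tbraid_inPq. Qed.

Hypothesis q_neq0 : q != 0.
Hypothesis A_diag : forall i, A i i = 2.
Hypothesis A_finite : forall i j, i != j -> finite_type_pair (A i j) (A j i).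

Lemma Tbraid_wt i p : inPq p -> wt (Tbraid A d q i p) = sref A i (wt p).
Proof.
move=> p_inA; apply/funext => j; rewrite /wt /sref -!/(rdeg _) /Tbraid.
have pi_inA c := rsub_inA c (p_inA i).
have pj_inA := p_inA j.
case: eqP => [->|/eqP ji].
  by rewrite rdeg_rinv rdeg_rsub ?expf_neq0 // A_diag; ring.
case: (finite_type_pair_entry (A_finite ji)) => ->; rewrite /=.
all: rewrite ?rdeg_rmul ?rdeg_rsub ?expf_neq0 //; try ring.
all: by do ?apply: rmul_inA.
Qed.

Lemma Tw_wt w p : inPq p -> wt (Tw A d q w p) = wact A w (wt p).
Proof.
move=> p_inA; elim: w => [//|i w IH].
by rewrite /= Tbraid_wt ?IH //; apply: Tw_inPq.
Qed.
End BraidAction.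

Theorem lemma2p5 (R : realType) (n : nat) (A : 'M[int]_n) (d : 'I_n -> nat)
    (q : R[i]) :
  simple_cartan R A d ->
  not_root_of_unity q ->
  (* (i) *)
  (forall (w : seq 'I_n) (p : Pq R[i] n), reduced A w -> inPq p ->
     wt (Tw A d q w p) = wact A w (wt p)) /\
  (* (ii) *)
  (forall (p1 p2 : Pq R[i] n) (w1 w2 : seq 'I_n),
     inPq p1 -> inPq p2 -> dominant (wt p1) -> dominant (wt p2) ->
     reduced A w1 -> reduced A w2 ->
     Pq_eq (Tw A d q w1 p1) (Tw A d q w2 p2) ->
     wt p1 = wt p2 /\ in_stab A (wt p1) (winv w1 ++ w2)).
Proof.
move=> cartan [q_neq0 _].
have A_diag : forall i, A i i = 2 by case: cartan => _ [].
have A_finite := simple_cartan_pair cartan.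
split=> [w p _ p_inA | p1 p2 w1 w2 p1_inA p2_inA dom1 dom2 _ _ T12].
  exact: Tw_wt.
have wt12 : wact A w1 (wt p1) = wact A w2 (wt p2).
  rewrite -!(Tw_wt d q_neq0 A_diag A_finite) //; apply/funext => i.
  by apply: req_rdeg; [apply: Tw_inPq | apply: Tw_inPq | apply: T12].
have /(dominant_wact_stab A_diag A_finite dom2 dom1)[wt21 stab] :
    wact A (winv w1 ++ w2) (wt p2) = wt p1.
  by rewrite wact_cat -wt12 wact_revK.
by rewrite -wt21.
Qed.
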